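(* Fix $i\in\{1,\dots,\underline m\}$. Suppose $(A,B,K,\underline b,d,\underline D_{[i]},W_{[i]})$ with $\underline D_{[i]}\in\mathbb{D}_+^{\underline m}$, $W_{[i]}\in\mathbb{D}_+^{m_w}$ satisfies condition (RPI$_i$). Consider the LMI in the variables $(\mathbf A,\mathbf B,\mathbf d,\mathbf K,\underline{\mathbf b},\hat{\underline{\mathbf D}}_{[i]},\hat{\mathbf W}_{[i]})$: $$\begin{bmatrix} \mathbf I & \mathbf 0 & \mathbf 0 & -\mathbf B^\top\underline P_i^\top & \mathbf 0 & \mathbf K\\ * & \hat{\underline{\mathbf D}}_{[i]} & \mathbf 0 & \underline{\mathbf b} & \mathbf 0 & \mathbf 0\\ * & * & \hat{\mathbf W}_{[i]} & \mathbf d & \mathbf 0 & \mathbf 0\\ * & * & * & 2\underline{\mathbf b}_i+\mathcal{L}^{B^\top\underline P_i^\top,\mathbf I}_{\mathbf B^\top\underline P_i^\top,\mathbf I} & \underline P_i & \underline P_i\mathbf A\\ * & * & * & * & \mathcal{L}^{F,W_{[i]}^{-1}}_{F,\hat{\mathbf W}_{[i]}} & \mathbf 0\\ * & * & * & * & * & \mathcal{L}^{\underline P,\underline D_{[i]}^{-1}}_{\underline P,\hat{\underline{\mathbf D}}_{[i]}}+\mathcal{L}^{K,\mathbf I}_{\mathbf K,\mathbf I} \end{bmatrix}\succ0 .$$ Then (a) this LMI is satisfied by $(\mathbf A,\mathbf B,\mathbf d,\mathbf K,\underline{\mathbf b},\hat{\underline{\mathbf D}}_{[i]},\hat{\mathbf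 W}_{[i]})=(A,B,d,K,\underline b,\underline D_{[i]}^{-1},W_{[i]}^{-1})$; and (b) any solution with $\hat{\underline{\mathbf D}}_{[i]}\in\mathbb{D}_+^{\underline m}$, $\hat{\mathbf W}_{[i]}\in\mathbb{D}_+^{m_w}$ is such that $(\mathbf A,\mathbf B,\mathbf K,\underline{\mathbf b},\mathbf d,\hat{\underline{\mathbf D}}_{[i]}^{-1},\hat{\mathbf W}_{[i]}^{-1})$ satisfies condition (RPI$_i$).
   Context: Notation: $M_i$ is the $i$-th row of a matrix $M$, $b_i$ the $i$-th entry of a vector $b$; $\mathbb{D}_+^m$ is the set of $m\times m$ diagonal matrices with positive diagonal; $\succ0$ means symmetric positive definite; $*$ denotes symmetric blocks; $\mathbf I,\mathbf 0$ identity and zero blocks of appropriate size (the first diagonal $\mathbf I$ is $n_u\times n_u$). For matrices $\mathbf L,L\in\mathbb{R}^{m\times n}$ and symmetric invertible $\mathbf D,D\in\mathbb{R}^{m\times m}$, $\mathcal{L}^{L,D}_{\mathbf L,\mathbf D}:=\mathbf L^\top D^{-1}L+L^\top D^{-1}\mathbf L-L^\top D^{-1}\mathbf D D^{-1}L$. Fixed data: $\underline P\in\mathbb{R}^{\underline m\times n_x}$, $F\in\mathbb{R}^{m_w\times n_x}$. Variables: $A\in\mathbb{R}^{n_x\times n_x}$, $B\in\mathbb{R}^{n_x\times n_u}$, $K\in\mathbb{R}^{n_u\times n_x}$, $\underline b\in\mathbb{R}^{\underline m}$, $d\in\mathbb{R}^{m_w}$ (bold versions of the same sizes). Condition (RPI$_i$)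 for $(A,B,K,\underline b,d,\underline D_{[i]},W_{[i]})$: $$\begin{bmatrix}2\underline b_i-\underline b^\top\underline D_{[i]}\underline b-d^\top W_{[i]}d & \underline P_i & \underline P_i(A+BK)\\ * & F^\top W_{[i]}F & \mathbf 0\\ * & * & \underline P^\top\underline D_{[i]}\underline P\end{bmatrix}\succ0.$$ *)

From HB Require Import structures.
From mathcomp Require Import all_boot all_order all_algebra.
Set Implicit Arguments. Unset Strict Implicit. Unset Printing Implicit Defensive.
Import Order.TTheory GRing.Theory Num.Theory.
Local Open Scope ring_scope.

Definition posdef (R : realFieldType) (n : nat) (M : 'M[R]_n) : Prop :=
  M^T = M /\ forall x : 'cV[R]_n, x != 0 -> 0 < (x^T *m M *m x) 0 0.

Definition diagpos (R : realFieldType) (n : nat) (D : 'M[R]_n) : Prop :=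
  is_diag_mx D /\ forall j : 'I_n, 0 < D j j.

Definition Lop (R : realFieldType) (m n : nat)
    (L : 'M[R]_(m, n)) (D : 'M[R]_m) (bL : 'M[R]_(m, n)) (bD : 'M[R]_m) : 'M[R]_n :=
  bL^T *m invmx D *m L + L^T *m invmx D *m bL
  - L^T *m invmx D *m bD *m invmx D *m L.

Definition RPI (R : realFieldType) (nx nu m mw : nat)
    (P : 'M[R]_(m, nx)) (F : 'M[R]_(mw, nx)) (i : 'I_m)
    (A : 'M[R]_nx) (B : 'M[R]_(nx, nu)) (K : 'M[R]_(nu, nx))
    (b : 'cV[R]_m) (d : 'cV[R]_mw) (D : 'M[R]_m) (W : 'M[R]_mw) : Prop :=
  let Pi := row i P in
  let s : 'M[R]_1 := (2 * b i 0)%:M - b^T *m D *m b - d^T *m W *m d in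
  let r1 : 'M[R]_(1, nx + nx) := row_mx Pi (Pi *m (A + B *m K)) in
  let M23 : 'M[R]_(nx + nx) := block_mx (F^T *m W *m F) 0 0 (P^T *m D *m P) in
  posdef (block_mx s r1 r1^T M23).

Definition LMI3 (R : realFieldType) (nx nu m mw : nat)
    (P : 'M[R]_(m, nx)) (F : 'M[R]_(mw, nx)) (i : 'I_m)
    (B : 'M[R]_(nx, nu)) (K : 'M[R]_(nu, nx)) (D : 'M[R]_m) (W : 'M[R]_mw)
    (bA : 'M[R]_nx) (bB : 'M[R]_(nx, nu)) (bd : 'cV[R]_mw) (bK : 'M[R]_(nu, nx))
    (bb : 'cV[R]_m) (Dh : 'M[R]_m) (Wh : 'M[R]_mw) : Prop :=
  let Pi := row i P in
  let I_u : 'M[R]_nu := 1%:M in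
  (* rows 5-6 *)
  let M6 : 'M[R]_nx := Lop P (invmx D) P Dh + Lop K I_u bK I_u in
  let M5 : 'M[R]_nx := Lop F (invmx W) F Wh in
  let M56 : 'M[R]_(nx + nx) := block_mx M5 0 0 M6 in
  (* row 4 *)
  let s4 : 'M[R]_1 := (2 * bb i 0)%:M
                      + Lop (B^T *m Pi^T) I_u (bB^T *m Pi^T) I_u in
  let r4 : 'M[R]_(1, nx + nx) := row_mx Pi (Pi *m bA) in
  let M4 : 'M[R]_(1 + (nx + nx)) := block_mx s4 r4 r4^T M56 in
  (* row 3 *)
  let r3 : 'M[R]_(mw, 1 + (nx + nx)) := row_mx bd (row_mx 0 0) in
  let M3 : 'M[R]_(mw + (1 + (nx + nx))) := block_mx Wh r3 r3^T M4 in
  (* row 2 *)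
  let r2 : 'M[R]_(m, mw + (1 + (nx + nx))) := row_mx 0 (row_mx bb (row_mx 0 0)) in
  let M2 : 'M[R]_(m + (mw + (1 + (nx + nx)))) := block_mx Dh r2 r2^T M3 in
  (* row 1 *)
  let r1 : 'M[R]_(nu, m + (mw + (1 + (nx + nx)))) :=
    row_mx 0 (row_mx 0 (row_mx (- (bB^T *m Pi^T)) (row_mx 0 bK))) in
  posdef (block_mx I_u r1 r1^T M2).

(* Completing the squares in the three block coordinates of the LMI that carry
   the identity, Dh and Wh blocks turns its quadratic form into a sum of three
   squares plus the (RPI_i) form at (bA, bB, bK, bb, bd, Dh^-1, Wh^-1), minus the
   four defects bL^T bD^-1 bL - Lop L D bL bD of the linearized terms. Each
   defect is nonnegative, being (bL - bD D^-1 L)^T bD^-1 (bL - bD D^-1 L), and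
   vanishes at (bL, bD) = (L, D). Hence at (A, B, d, K, b, D^-1, W^-1) the LMI form
   is the sum of three squares and the (RPI_i) form, which gives (a); and at a
   solution of the LMI, evaluating at the minimizing first coordinates shows the
   (RPI_i) form dominates a positive quantity, which gives (b). *)

From HB Require Import structures.
From mathcomp Require Import all_boot all_order all_algebra.
From mathcomp Require Import ring lra.
Import Order.TTheory GRing.Theory Num.Theory.
Local Open Scope ring_scope.

Set Implicit Arguments. Unset Strict Implicit. Unset Printing Implicit Defensive.

Section QuadraticForms.
Variable R : realFieldType.

Definition bform a b (u : 'cV[R]_a) (M : 'M[R]_(a, b)) (v : 'cV[R]_b) : R :=
  (u^T *m M *m v) 0 0.

Definition qform a (M : 'M[R]_a) (x : 'cV[R]_a) : R := bform x M x.

Lemma trmx11 (s : 'M[R]_1) : s^T = s.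
Proof. by apply/matrixP => i j; rewrite !ord1 mxE. Qed.

Lemma bform_tr a b (u : 'cV[R]_a) (M : 'M[R]_(a, b)) v : bform v M^T u = bform u M v.
Proof. by rewrite /bform -[u^T *m M *m v]trmx11 !trmx_mul trmxK mulmxA. Qed.

Lemma bformD a b (u : 'cV[R]_a) (M N : 'M[R]_(a, b)) v :
  bform u (M + N) v = bform u M v + bform u N v.
Proof. by rewrite /bform mulmxDr mulmxDl mxE. Qed.

Lemma bformN a b (u : 'cV[R]_a) (M : 'M[R]_(a, b)) v : bform u (- M) v = - bform u M v.
Proof. by rewrite /bform mulmxN mulNmx mxE. Qed.

Lemma bformB a b (u : 'cV[R]_a) (M N : 'M[R]_(a, b)) v :
  bform u (M - N) v = bform u M v - bform u N v.
Proof. by rewrite bformD bformN. Qed.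

Lemma bform0 a b (u : 'cV[R]_a) (v : 'cV[R]_b) : bform u 0 v = 0.
Proof. by rewrite /bform mulmx0 mul0mx mxE. Qed.

Lemma bform_row a b1 b2 (u : 'cV[R]_a) (M1 : 'M[R]_(a, b1)) (M2 : 'M[R]_(a, b2)) v1 v2 :
  bform u (row_mx M1 M2) (col_mx v1 v2) = bform u M1 v1 + bform u M2 v2.
Proof. by rewrite /bform mul_mx_row mul_row_col mxE. Qed.

Lemma bformDl a b (u1 u2 : 'cV[R]_a) (M : 'M[R]_(a, b)) v :
  bform (u1 + u2) M v = bform u1 M v + bform u2 M v.
Proof. by rewrite /bform linearD mulmxDl mulmxDl mxE. Qed.

Lemma bformDr a b (u : 'cV[R]_a) (M : 'M[R]_(a, b)) v1 v2 :
  bform u M (v1 + v2) = bform u M v1 + bform u M v2.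
Proof. by rewrite /bform mulmxDr mxE. Qed.

Lemma bformNl a b (u : 'cV[R]_a) (M : 'M[R]_(a, b)) v : bform (- u) M v = - bform u M v.
Proof. by rewrite /bform linearN mulNmx mulNmx mxE. Qed.

Lemma bformNr a b (u : 'cV[R]_a) (M : 'M[R]_(a, b)) v : bform u M (- v) = - bform u M v.
Proof. by rewrite /bform mulmxN mxE. Qed.

Lemma bform_col a1 a2 b (u1 : 'cV[R]_a1) (u2 : 'cV[R]_a2) (M1 : 'M[R]_(a1, b)) M2 v :
  bform (col_mx u1 u2) (col_mx M1 M2) v = bform u1 M1 v + bform u2 M2 v.
Proof. by rewrite /bform tr_col_mx mul_row_col mulmxDl mxE. Qed.

Lemma bform_mulmx a b c (X : 'M[R]_(c, a)) (M : 'M[R]_c) (Y : 'M[R]_(c, b)) u v :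
  bform u (X^T *m M *m Y) v = bform (X *m u) M (Y *m v).
Proof. by rewrite /bform trmx_mul !mulmxA. Qed.

Lemma qformD a (M N : 'M[R]_a) x : qform (M + N) x = qform M x + qform N x.
Proof. exact: bformD. Qed.

Lemma qformB a (M N : 'M[R]_a) x : qform (M - N) x = qform M x - qform N x.
Proof. exact: bformB. Qed.

Lemma qformx0 a (M : 'M[R]_a) : qform M 0 = 0.
Proof. by rewrite /qform /bform mulmx0 mxE. Qed.

Lemma qform0 a (x : 'cV[R]_a) : qform 0 x = 0.
Proof. exact: bform0. Qed.

Lemma qform_block a b (A : 'M[R]_a) (M : 'M[R]_(a, b)) (N : 'M[R]_b) u v :
  qform (block_mx A M M^T N) (col_mx u v) = qform A u + 2 * bform u M v + qform N v.
Proof. by rewrite /qform block_mxEv bform_col !bform_row -(bform_tr u M); ring. Qed.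

Lemma qform_block_diag a b (A : 'M[R]_a) (N : 'M[R]_b) u v :
  qform (block_mx A 0 0 N) (col_mx u v) = qform A u + qform N v.
Proof. by have := qform_block A 0 N u v; rewrite trmx0 bform0 mulr0 addr0. Qed.

Lemma block_mx_sym a b (A : 'M[R]_a) (M : 'M[R]_(a, b)) (N : 'M[R]_b) :
  A^T = A -> N^T = N -> (block_mx A M M^T N)^T = block_mx A M M^T N.
Proof. by move=> Asym Nsym; rewrite tr_block_mx Asym Nsym trmxK. Qed.

Lemma block_diag_sym a b (A : 'M[R]_a) (N : 'M[R]_b) :
  A^T = A -> N^T = N -> (block_mx A 0 0 N)^T = block_mx A 0 0 N.
Proof. by move=> Asym Nsym; rewrite tr_block_mx Asym Nsym !trmx0. Qed.

Lemma mulmx_tr_sym a b (X : 'M[R]_(a, b)) (M : 'M[R]_a) :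
  M^T = M -> (X^T *m M *m X)^T = X^T *m M *m X.
Proof. by move=> Msym; rewrite !trmx_mul trmxK Msym mulmxA. Qed.

Lemma qform_complete_square a b (M : 'M[R]_a) (N : 'M[R]_(a, b)) y x :
  M^T = M -> M \in unitmx ->
  qform M (y + invmx M *m (N *m x)) =
  qform M y + 2 * bform y N x + qform (N^T *m invmx M *m N) x.
Proof.
move=> Msym Munit; set w := invmx M *m (N *m x).
have cross : bform y M w = bform y N x by rewrite /bform -mulmxA mulKVmx ?mulmxA.
have square : bform w M w = qform (N^T *m invmx M *m N) x.
  by rewrite /qform bform_mulmx /bform trmx_mul trmx_inv Msym -!mulmxA mulKVmx.
rewrite -square /qform bformDl !bformDr -[bform w M y]bform_tr Msym cross; ring.
Qed.

Lemma posdef_qform_gt0 a (M : 'M[R]_a) x : posdef M -> x != 0 -> 0 < qform M x.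
Proof. by case=> _; apply. Qed.

Lemma posdef_qform_ge0 a (M : 'M[R]_a) x : posdef M -> 0 <= qform M x.
Proof.
move=> Mpd; have [->|x0] := eqVneq x 0; first by rewrite qformx0.
exact/ltW/posdef_qform_gt0.
Qed.

Lemma posdef_unit a (M : 'M[R]_a) : posdef M -> M \in unitmx.
Proof.
case=> Msym Mpos; rewrite -row_free_unit -kermx_eq0.
apply: contraT => /rowV0Pn [u /sub_kermxP uM0 u0].
by have := Mpos u^T; rewrite trmx_eq0 trmxK uM0 mul0mx mxE ltxx => /(_ u0).
Qed.

Lemma posdef_inv a (M : 'M[R]_a) : posdef M -> posdef (invmx M).
Proof.
move=> Mpd; have Munit := posdef_unit Mpd; case: Mpd => Msym Mpos.
split=> [|x x0]; first by rewrite trmx_inv Msym.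
change (0 < qform (invmx M) x).
have -> : qform (invmx M) x = qform M (invmx M *m x).
  by rewrite /qform -bform_mulmx trmx_inv Msym mulVmx ?mul1mx.
apply: Mpos; apply: contra_neq x0 => iMx0.
by rewrite -(mulKVmx Munit x) iMx0 mulmx0.
Qed.

Lemma diagpos_posdef a (D : 'M[R]_a) : diagpos D -> posdef D.
Proof.
case=> /is_diag_mxP Ddiag Dpos.
have DE : D = diag_mx (\row_j D j j).
  apply/matrixP => p q; rewrite !mxE; have [->|pq] := eqVneq p q.
    by rewrite mulr1n.
  by rewrite mulr0n Ddiag.
split=> [|e e0]; first by rewrite DE tr_diag_mx.
change (0 < qform D e).
have [j ej] : exists j, e j 0 != 0.
  apply/existsP; apply: contraR e0 => /existsPn e_0.
  by apply/eqP/matrixP => p q; rewrite ord1 mxE; apply/eqP/negPn/e_0.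
have qformE : qform D e = \sum_k D k k * e k 0 ^+ 2.
  rewrite {1}DE /qform /bform mul_mx_diag mxE.
  by apply: eq_bigr => k _; rewrite !mxE; ring.
rewrite qformE (bigD1 j) //=.
have : 0 < D j j * e j 0 ^+ 2 by rewrite mulr_gt0 // exprn_even_gt0.
have : 0 <= \sum_(k | k != j) D k k * e k 0 ^+ 2.
  by apply: sumr_ge0 => k _; rewrite mulr_ge0 ?sqr_ge0 ?ltW.
lra.
Qed.

Lemma posdef1 a : posdef (1%:M : 'M[R]_a).
Proof.
apply: diagpos_posdef; split; first by rewrite -diag_const_mx diag_mx_is_diag.
by move=> j; rewrite mxE eqxx.
Qed.

Lemma posdef_block_diag a b (A : 'M[R]_a) (N : 'M[R]_b) :
  posdef A -> posdef N -> posdef (block_mx A 0 0 N).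
Proof.
move=> Apd Npd; split=> [|x x0].
  by rewrite tr_block_mx !trmx0 Apd.1 Npd.1.
change (0 < qform (block_mx A 0 0 N) x).
rewrite -(vsubmxK x) qform_block_diag; rewrite -(vsubmxK x) in x0.
move: (usubmx x) (dsubmx x) x0 => u v uv0.
have := posdef_qform_ge0 u Apd; have := posdef_qform_ge0 v Npd.
have [u0|/(posdef_qform_gt0 Apd)] := eqVneq u 0; last lra.
have [v0|/(posdef_qform_gt0 Npd)] := eqVneq v 0; last lra.
by move: uv0; rewrite u0 v0 col_mx0 eqxx.
Qed.
End QuadraticForms.

Section Linearization.
Variable R : realFieldType.

Definition Lop_defect m n (L : 'M[R]_(m, n)) D bL bD : 'M[R]_n :=
  bL^T *m invmx bD *m bL - Lop L D bL bD.

(* [Lop L D bL bD] linearizes the jointly convex map [(bL, bD) |-> bL^T bD^-1 bL]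
   at [(L, D)]. *)
Lemma Lop_defectE m n (L bL : 'M[R]_(m, n)) D bD :
  D^T = D -> bD^T = bD -> bD \in unitmx ->
  let X := bL - bD *m invmx D *m L in
  Lop_defect L D bL bD = X^T *m invmx bD *m X.
Proof.
move=> Dsym bDsym bDunit X.
have trB (U V : 'M[R]_(m, n)) : (U - V)^T = U^T - V^T by apply/matrixP => p q; rewrite !mxE.
rewrite /X /Lop_defect /Lop trB !trmx_mul trmx_inv Dsym bDsym.
rewrite !mulmxBl !mulmxBr !mulmxA -[_ *m invmx bD *m bD]mulmxA mulVmx // mulmx1.
rewrite -[_ *m bD *m invmx bD]mulmxA mulmxV // mulmx1.
by rewrite !(opprD, opprK, addrA).
Qed.

Lemma Lop_sym m n (L bL : 'M[R]_(m, n)) D bD :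
  D^T = D -> bD^T = bD -> (Lop L D bL bD)^T = Lop L D bL bD.
Proof.
move=> Dsym bDsym; rewrite /Lop raddfB raddfD /= !trmx_mul !trmxK trmx_inv Dsym bDsym.
by rewrite !mulmxA [_ + (L^T *m _ *m _)]addrC.
Qed.

Lemma Lop_defect_ge0 m n (L bL : 'M[R]_(m, n)) D bD x :
  D^T = D -> posdef bD -> 0 <= qform (Lop_defect L D bL bD) x.
Proof.
move=> Dsym bDpd; rewrite Lop_defectE ?posdef_unit //; last by case: bDpd.
by rewrite /qform bform_mulmx; apply/posdef_qform_ge0/posdef_inv.
Qed.

Lemma Lop_defect_id m n (L : 'M[R]_(m, n)) D : D \in unitmx -> Lop_defect L D L D = 0.
Proof.
move=> Dunit; rewrite /Lop_defect /Lop -[_ *m D *m invmx D]mulmxA mulmxV // mulmx1.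
by rewrite addrK subrr.
Qed.
End Linearization.

Section Theorem3.
Variables (R : realFieldType) (nx nu m mw : nat).
Variables (P : 'M[R]_(m, nx)) (F : 'M[R]_(mw, nx)) (i : 'I_m).

Local Notation Pi := (row i P).

Definition rpi_mx (A : 'M[R]_nx) (B : 'M[R]_(nx, nu)) (K : 'M[R]_(nu, nx))
    (b : 'cV[R]_m) (d : 'cV[R]_mw) (D : 'M[R]_m) (W : 'M[R]_mw) : 'M[R]_(1 + (nx + nx)) :=
  let r := row_mx Pi (Pi *m (A + B *m K)) in
  block_mx ((2 * b i 0)%:M - b^T *m D *m b - d^T *m W *m d) r r^T
    (block_mx (F^T *m W *m F) 0 0 (P^T *m D *m P)).

Lemma RPIE A B K b d D W : RPI P F i A B K b d D W = posdef (rpi_mx A B K b d D W).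
Proof. by []. Qed.

Definition lmi_mx (B : 'M[R]_(nx, nu)) (K : 'M[R]_(nu, nx)) (D : 'M[R]_m) (W : 'M[R]_mw)
    (bA : 'M[R]_nx) (bB : 'M[R]_(nx, nu)) (bd : 'cV[R]_mw) (bK : 'M[R]_(nu, nx))
    (bb : 'cV[R]_m) (Dh : 'M[R]_m) (Wh : 'M[R]_mw) :
    'M[R]_(nu + (m + (mw + (1 + (nx + nx))))) :=
  let C := bB^T *m Pi^T in
  let M56 := block_mx (Lop F (invmx W) F Wh) 0 0
               (Lop P (invmx D) P Dh + Lop K 1%:M bK 1%:M) in
  let r4 := row_mx Pi (Pi *m bA) in
  let M4 := block_mx ((2 * bb i 0)%:M + Lop (B^T *m Pi^T) 1%:M C 1%:M) r4 r4^T M56 in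
  let r3 := row_mx bd (row_mx 0 0) in
  let M3 := block_mx Wh r3 r3^T M4 in
  let r2 := row_mx 0 (row_mx bb (row_mx 0 0)) in
  let M2 := block_mx Dh r2 r2^T M3 in
  let r1 := row_mx 0 (row_mx 0 (row_mx (- C) (row_mx 0 bK))) in
  block_mx 1%:M r1 r1^T M2.

Lemma LMI3E B K D W bA bB bd bK bb Dh Wh :
  LMI3 P F i B K D W bA bB bd bK bb Dh Wh = posdef (lmi_mx B K D W bA bB bd bK bb Dh Wh).
Proof. by []. Qed.

Lemma qform_lmi_mx B K D W bA bB bd bK bb Dh Wh y1 y2 y3 x4 x5 x6 :
  Dh^T = Dh -> Dh \in unitmx -> Wh^T = Wh -> Wh \in unitmx ->
  let C := bB^T *m Pi^T in
  qform (lmi_mx B K D W bA bB bd bK bb Dh Wh)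
    (col_mx y1 (col_mx y2 (col_mx y3 (col_mx x4 (col_mx x5 x6))))) =
  qform 1%:M (y1 + (bK *m x6 - C *m x4))
  + qform Dh (y2 + invmx Dh *m (bb *m x4)) + qform Wh (y3 + invmx Wh *m (bd *m x4))
  + qform (rpi_mx bA bB bK bb bd (invmx Dh) (invmx Wh)) (col_mx x4 (col_mx x5 x6))
  - (qform (Lop_defect (B^T *m Pi^T) 1%:M C 1%:M) x4
     + qform (Lop_defect F (invmx W) F Wh) x5
     + qform (Lop_defect P (invmx D) P Dh) x6
     + qform (Lop_defect K 1%:M bK 1%:M) x6).
Proof.
move=> Dhsym Dhunit Whsym Whunit C.
have cross : bform (C *m x4) 1%:M (bK *m x6) = bform x4 (Pi *m (bB *m bK)) x6.
  by rewrite -bform_mulmx mulmx1 trmx_mul !trmxK mulmxA.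
have sq1 : qform 1%:M (y1 + (bK *m x6 - C *m x4)) =
    qform 1%:M y1 - 2 * bform y1 C x4 + 2 * bform y1 bK x6
    + qform (C^T *m 1%:M *m C) x4 - 2 * bform x4 (Pi *m (bB *m bK)) x6
    + qform (bK^T *m 1%:M *m bK) x6.
  have := qform_complete_square (row_mx (- C) bK) y1 (col_mx x4 x6) (@trmx1 R nu) (@unitmx1 R nu).
  rewrite mul_row_col mulNmx [- _ + _]addrC invmx1 mul1mx bform_row bformN => ->.
  rewrite /qform !bform_mulmx mul_row_col mulNmx.
  rewrite !(bformDl, bformDr, bformNl, bformNr) -[bform (bK *m x6) _ _]bform_tr.
  rewrite trmx1 cross; ring.
have sq2 := qform_complete_square bb y2 x4 Dhsym Dhunit.
have sq3 := qform_complete_square bd y3 x4 Whsym Whunit.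
rewrite /lmi_mx /rpi_mx /Lop_defect -/C mulmxDr invmx1.
rewrite !(qform_block, qform_block_diag, bform_row, bform0, qformB, qformD, bformD, bformN).
lra.
Qed.

Lemma rpi_mx_sym A B K b d D W : D^T = D -> W^T = W ->
  (rpi_mx A B K b d D W)^T = rpi_mx A B K b d D W.
Proof.
move=> Dsym Wsym; apply: block_mx_sym; first exact: trmx11.
by apply: block_diag_sym; apply: mulmx_tr_sym.
Qed.

Lemma lmi_mx_sym B K D W bA bB bd bK bb Dh Wh :
  D^T = D -> W^T = W -> Dh^T = Dh -> Wh^T = Wh ->
  (lmi_mx B K D W bA bB bd bK bb Dh Wh)^T = lmi_mx B K D W bA bB bd bK bb Dh Wh.
Proof.
move=> Dsym Wsym Dhsym Whsym.
have iDsym : (invmx D)^T = invmx D by rewrite trmx_inv Dsym.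
have iWsym : (invmx W)^T = invmx W by rewrite trmx_inv Wsym.
do 4![apply: block_mx_sym => //; rewrite ?trmx1 ?trmx11 //].
apply: block_diag_sym; first exact: Lop_sym.
by rewrite raddfD /= !Lop_sym ?trmx1.
Qed.

Lemma lmi_mx_posdef A B K b d D W :
  posdef D -> posdef W -> posdef (rpi_mx A B K b d D W) ->
  posdef (lmi_mx B K D W A B d K b (invmx D) (invmx W)).
Proof.
move=> Dpd Wpd RPIpd; have iDpd := posdef_inv Dpd; have iWpd := posdef_inv Wpd.
split=> [|z z0]; first by apply: lmi_mx_sym; [case: Dpd | case: Wpd | case: iDpd | case: iWpd].
change (0 < qform (lmi_mx B K D W A B d K b (invmx D) (invmx W)) z).
rewrite -(vsubmxK z) -[dsubmx z](vsubmxK _) -[dsubmx (dsubmx z)](vsubmxK _) in z0 *.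
rewrite -[dsubmx (dsubmx (dsubmx z))](vsubmxK _) -[dsubmx (dsubmx (dsubmx (dsubmx z)))](vsubmxK _) in z0 *.
move: (usubmx z) (usubmx (dsubmx z)) (usubmx (dsubmx (dsubmx z))) z0.
move: (usubmx (dsubmx (dsubmx (dsubmx z)))) (usubmx (dsubmx (dsubmx (dsubmx (dsubmx z))))).
move: (dsubmx (dsubmx (dsubmx (dsubmx (dsubmx z))))) => x6 x4 x5 y1 y2 y3 z0.
rewrite qform_lmi_mx ?unitmx_inv ?posdef_unit ?iDpd.1 ?iWpd.1 //.
rewrite !Lop_defect_id ?unitmx1 ?unitmx_inv ?posdef_unit // !qform0 !invmxK !addr0 subr0.
set x := col_mx x4 (col_mx x5 x6).
have blockpd := posdef_block_diag (posdef1 R nu)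
  (posdef_block_diag iDpd (posdef_block_diag iWpd RPIpd)).
rewrite -!addrA -!qform_block_diag; apply: posdef_qform_gt0 blockpd _.
have [x_0|] := eqVneq x 0; last first.
  by apply: contra; rewrite !col_mx_eq0 => /and4P [].
move: z0 x_0; rewrite /x => /[swap] /eqP; rewrite !col_mx_eq0 => /and3P [/eqP-> /eqP-> /eqP->].
by rewrite !mulmx0 subrr !addr0.
Qed.

Lemma rpi_mx_posdef B K D W bA bB bd bK bb Dh Wh :
  D^T = D -> W^T = W -> posdef Dh -> posdef Wh ->
  posdef (lmi_mx B K D W bA bB bd bK bb Dh Wh) ->
  posdef (rpi_mx bA bB bK bb bd (invmx Dh) (invmx Wh)).
Proof.
move=> Dsym Wsym Dhpd Whpd LMIpd.
split=> [|x x0]; first by apply: rpi_mx_sym; [case: (posdef_inv Dhpd) | case: (posdef_inv Whpd)].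
change (0 < qform (rpi_mx bA bB bK bb bd (invmx Dh) (invmx Wh)) x).
rewrite -(vsubmxK x) -[dsubmx x](vsubmxK _) in x0 *.
move: (usubmx x) (usubmx (dsubmx x)) (dsubmx (dsubmx x)) x0 => x4 x5 x6 x0.
(* The minimizers of the LMI form over the first three block coordinates. *)
set y1 := - (bK *m x6 - bB^T *m Pi^T *m x4).
set y2 := - (invmx Dh *m (bb *m x4)).
set y3 := - (invmx Wh *m (bd *m x4)).
have /(posdef_qform_gt0 LMIpd) :
    col_mx y1 (col_mx y2 (col_mx y3 (col_mx x4 (col_mx x5 x6)))) != 0.
  by apply: contra x0; rewrite !col_mx_eq0 => /and4P [].
rewrite qform_lmi_mx ?Dhpd.1 ?Whpd.1 ?posdef_unit // !addNr !qformx0 !add0r.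
have iDsym : (invmx D)^T = invmx D by rewrite trmx_inv Dsym.
have iWsym : (invmx W)^T = invmx W by rewrite trmx_inv Wsym.
have := Lop_defect_ge0 (B^T *m Pi^T) (bB^T *m Pi^T) x4 (@trmx1 R nu) (posdef1 R nu).
have := Lop_defect_ge0 F F x5 iWsym Whpd.
have := Lop_defect_ge0 P P x6 iDsym Dhpd.
have := Lop_defect_ge0 K bK x6 (@trmx1 R nu) (posdef1 R nu).
lra.
Qed.
End Theorem3.

Unset Implicit Arguments.

Theorem theorem3 (R : realFieldType) (nx nu m mw : nat)
    (P : 'M[R]_(m, nx)) (F : 'M[R]_(mw, nx)) (i : 'I_m)
    (A : 'M[R]_nx) (B : 'M[R]_(nx, nu)) (K : 'M[R]_(nu, nx))
    (b : 'cV[R]_m) (d : 'cV[R]_mw) (D : 'M[R]_m) (W : 'M[R]_mw) :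
  diagpos D -> diagpos W -> RPI P F i A B K b d D W ->
  LMI3 P F i B K D W A B d K b (invmx D) (invmx W) /\
  (forall (bA : 'M[R]_nx) (bB : 'M[R]_(nx, nu)) (bd : 'cV[R]_mw)
          (bK : 'M[R]_(nu, nx)) (bb : 'cV[R]_m) (Dh : 'M[R]_m) (Wh : 'M[R]_mw),
     diagpos Dh -> diagpos Wh ->
     LMI3 P F i B K D W bA bB bd bK bb Dh Wh ->
     RPI P F i bA bB bK bb bd (invmx Dh) (invmx Wh)).
Proof.
move=> /diagpos_posdef Dpd /diagpos_posdef Wpd RPIi; split.
  by rewrite LMI3E; apply: lmi_mx_posdef.
move=> bA bB bd bK bb Dh Wh /diagpos_posdef Dhpd /diagpos_posdef Whpd.
by rewrite LMI3E RPIE; apply: rpi_mx_posdef; [case: Dpd | case: Wpd | |].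
Qed.
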